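(* For $A,x\in\mathbb{R}$ define $E_0(A,x):=1$, $E_1(A,x):=e^{(1-x)A}$ and, for $n\ge2$, \[ E_n(A,x):=\begin{cases} \exp\!\Big(\big[x(E_1+E_3+\cdots+E_{n-1})-\tfrac n2\big]A\Big), & n \text{ even},\\[4pt] \exp\!\Big(\big[\tfrac{n+1}{2}-x(E_0+E_2+\cdots+E_{n-1})\big]A\Big), & n\text{ odd},\end{cases} \] with all $E_j$ evaluated at $(A,x)$. Define $\varphi_1(A,x):=x-1$, $\varphi_n(A,x):=\varphi_{n-1}(A,x)-1+xE_{n-1}(A,x)$ for $n\ge2$, and the polynomial $p_n(A):=\frac{\partial\varphi_n}{\partial x}(A,1)$. Then for every integer $n\ge1$, $\deg p_n=n-1$; moreover the leading coefficient of $p_n$ equals $1$ if $n\equiv0$ or $n\equiv1\pmod 4$, and equals $-1$ if $n\equiv2$ or $n\equiv3\pmod4$. *)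

From HB Require Import structures.
From mathcomp Require Import all_boot all_order all_algebra.
From mathcomp Require Import all_classical all_reals all_analysis.
Set Implicit Arguments. Unset Strict Implicit. Unset Printing Implicit Defensive.
Import Order.TTheory GRing.Theory Num.Theory.
Local Open Scope ring_scope.

Section Defs.
Variable R : realType.

(* Given the list s = [:: E_0; ...; E_(m-1)], compute E_m (m >= 1). *)
Definition Enext (A x : R) (s : seq R) (m : nat) : R :=
  if m == 1%N then expR ((1 - x) * A)
  else if odd m then
    expR (((m.+1)%:R / 2 - x * \sum_(j < m | ~~ odd j) s`_j) * A)
  else
    expR ((x * \sum_(j < m | odd j) s`_j - m%:R / 2) * A).

Fixpoint Eseq (A x : R) (n : nat) : seq R :=
  match n with
  | 0 => [:: 1]
  | n'.+1 => let s := Eseq A x n' in rcons s (Enext A x s n'.+1)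
  end.

Definition E (n : nat) (A x : R) : R := nth 0 (Eseq A x n) n.

(* phi_1 = x - 1, phi_n = phi_(n-1) - 1 + x E_(n-1); phi_0 is an unused dummy. *)
Fixpoint phi (n : nat) (A x : R) : R :=
  match n with
  | 0 => 0
  | n'.+1 => if n' is 0 then x - 1 else phi n' A x - 1 + x * E n' A x
  end.
End Defs.

(* At x = 1 every E_j equals 1: the exponent of E_n is (-1)^n A times
   x * (sum of the E_j, j < n, of parity opposite to n) minus the number
   uphalf n of such j.  Differentiating at x = 1 therefore gives, for
   q_j(A) := d/dx (x E_j(A, x)) at x = 1,
     q_n = 1 + (-1)^n A * sum_(j < n, j and n of opposite parity) q_j,
   and p_n = q_0 + ... + q_(n-1).  In each of these sums the last term
   q_(n-1) has strictly the largest degree, so by induction q_n has degree n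
   and leading coefficient (-1)^n times that of q_(n-1), which is sgn4 (n+1);
   p_n then has degree n - 1 and the leading coefficient of q_(n-1). *)

From HB Require Import structures.
From mathcomp Require Import all_boot all_order all_algebra.
From mathcomp Require Import all_classical all_reals all_analysis.
From mathcomp Require Import ring.
Import Order.TTheory GRing.Theory Num.Theory.
Local Open Scope ring_scope.

Definition sgn4 (R : pzRingType) (n : nat) : R :=
  if (n %% 4 == 0)%N || (n %% 4 == 1)%N then 1 else -1.

Lemma sgn4S (R : pzRingType) n : sgn4 R n.+1 = (-1) ^+ n * sgn4 R n.
Proof.
rewrite /sgn4 -signr_odd -(odd_mod n (erefl : odd 4 = false)) -addn1 -modnDml.
by case: (n %% 4)%N (ltn_pmod n (isT : 0 < 4)%N) => [|[|[|[|]]]] //= _;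
  rewrite ?mul1r ?mulN1r ?opprK.
Qed.

Section Polynomials.
Variable R : nzRingType.

Lemma size_lead_coef_sum_dominant (F : nat -> {poly R}) (P : pred nat) m :
    P m -> (forall j, (j < m)%N -> (size (F j) < size (F m))%N) ->
  size (\sum_(j < m.+1 | P j) F j) = size (F m) /\
  lead_coef (\sum_(j < m.+1 | P j) F j) = lead_coef (F m).
Proof.
move=> Pm F_lt; rewrite big_mkcond big_ord_recr /= Pm -big_mkcond addrC.
case: m Pm F_lt => [|m] _ F_lt; first by rewrite big_ord0 addr0.
suff rest_lt : (size (\sum_(j < m.+1 | P j) F j)%R < size (F m.+1))%N.
  by rewrite size_polyDl // lead_coefDl.
apply: leq_ltn_trans (size_sum _ _ _) _.
case Fm : (size (F m.+1)) (F_lt 0%N isT) => [//|k] _.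
by rewrite ltnS; apply/bigmax_leqP => j _; rewrite -ltnS -Fm F_lt.
Qed.

(* dxE_poly n is the polynomial q_n of the header (see E_at1_is_derive). *)
Definition dxE_next (s : seq {poly R}) (n : nat) : {poly R} :=
  1 + (-1) ^+ n *: ((\sum_(j < n | odd j != odd n) s`_j) * 'X).

Fixpoint dxE_seq (n : nat) : seq {poly R} :=
  if n is m.+1 then rcons (dxE_seq m) (dxE_next (dxE_seq m) n)
  else [:: dxE_next [::] 0].

Definition dxE_poly (n : nat) : {poly R} := (dxE_seq n)`_n.

Lemma size_dxE_seq n : size (dxE_seq n) = n.+1.
Proof. by elim: n => //= n IH; rewrite size_rcons IH. Qed.

Lemma nth_dxE_seq n j : (j <= n)%N -> (dxE_seq n)`_j = dxE_poly j.
Proof.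
elim: n => [|n IH]; first by rewrite leqn0 => /eqP ->.
rewrite leq_eqVlt => /predU1P[-> //|lt_jn] /=.
by rewrite nth_rcons size_dxE_seq lt_jn IH.
Qed.

Lemma dxE_polyE n :
  dxE_poly n = 1 + (-1) ^+ n *: ((\sum_(j < n | odd j != odd n) dxE_poly j) * 'X).
Proof.
case: n => [|n]; first by rewrite /dxE_poly /= /dxE_next !big_ord0.
rewrite /dxE_poly /= nth_rcons size_dxE_seq ltnn eqxx /dxE_next.
by congr (_ + _ *: (_ * _)); apply: eq_bigr => j _; rewrite nth_dxE_seq // -ltnS.
Qed.

Lemma dxE_poly0 : dxE_poly 0 = 1.
Proof. by rewrite dxE_polyE big_ord0 mul0r scaler0 addr0. Qed.

Lemma size_lead_coef_dxE_poly n :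
  size (dxE_poly n) = n.+1 /\ lead_coef (dxE_poly n) = sgn4 R n.+1.
Proof.
elim/ltn_ind: n => -[_|m IH]; first by rewrite dxE_poly0 size_poly1 lead_coef1.
have [size_m lead_m] := IH m (ltnSn m).
rewrite dxE_polyE; set S := \sum_(j < m.+1 | _) _.
case: (size_lead_coef_sum_dominant dxE_poly (fun j => odd j != odd m.+1) m).
- by rewrite /=; case: (odd m).
- by move=> j lt_jm; have [-> _] := IH j (ltnW lt_jm); rewrite size_m.
rewrite -/S size_m lead_m => sizeS leadS.
have S_neq0 : S != 0 by rewrite -size_poly_gt0 sizeS.
have sizeXS : size ((-1) ^+ m.+1 *: (S * 'X)) = m.+2.
  by rewrite (lreg_size _ (@lreg_sign _ _)) (size_mulX S_neq0) sizeS.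
rewrite addrC size_polyDl ?lead_coefDl ?size_poly1 ?sizeXS //; split=> //.
by rewrite (lead_coef_lreg _ (@lreg_sign _ _)) lead_coefMX leadS [RHS]sgn4S.
Qed.

Lemma size_lead_coef_sum_dxE_poly m :
  size (\sum_(j < m.+1) dxE_poly j) = m.+1 /\
  lead_coef (\sum_(j < m.+1) dxE_poly j) = sgn4 R m.+1.
Proof.
have [size_m lead_m] := size_lead_coef_dxE_poly m.
case: (size_lead_coef_sum_dominant dxE_poly predT m) => //.
  by move=> j lt_jm; have [-> _] := size_lead_coef_dxE_poly j; rewrite size_m.
by rewrite size_m lead_m.
Qed.
End Polynomials.

Lemma is_derive_sum_cond (R : numFieldType) (V W : normedModType R) n
    (P : pred 'I_n) (h : 'I_n -> V -> W) (x v : V) (dh : 'I_n -> W) :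
  (forall i, P i -> is_derive x v (h i) (dh i)) ->
  is_derive x v (fun y => \sum_(i < n | P i) h i y) (\sum_(i < n | P i) dh i).
Proof.
move=> dh_h; rewrite -fct_sumE big_mkcond [X in is_derive _ _ _ X]big_mkcond.
apply: is_derive_sum => i; case: ifP => [/dh_h //|_]; exact: is_derive_cst.
Qed.

Lemma sum_odd_eq n (b : bool) :
  (\sum_(j < n | odd j == b) 1 = if b then n./2 else uphalf n)%N.
Proof.
elim: n => [|n IH]; first by rewrite big_ord0; case: b.
rewrite big_mkcond big_ord_recr /= -big_mkcond {}IH uphalf_half.
by case: b; case: (odd n); rewrite /= ?addn0 ?addn1.
Qed.

Lemma sum_odd_neq n : (\sum_(j < n | odd j != odd n) 1 = uphalf n)%N.
Proof.
rewrite (eq_bigl (fun j : 'I_n => odd j == ~~ odd n)) => [|j]; last first.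
  by case: odd; case: odd.
by rewrite sum_odd_eq uphalf_half; case: (odd n).
Qed.

Section Exponentials.
Variables (R : realType) (A : R).

Lemma natr_uphalf n : (uphalf n)%:R = (n + odd n)%:R / 2 :> R.
Proof. by rewrite -[(n + _)%N]addnC -uphalfK -muln2 natrM mulfK ?pnatr_eq0. Qed.

Lemma Enext_expR (x : R) (s : seq R) m : (0 < m)%N -> s`_0 = 1 ->
  Enext A x s m =
  expR ((-1) ^+ m * (x * \sum_(j < m | odd j != odd m) s`_j - (uphalf m)%:R) * A).
Proof.
case: m => // m _ s0; rewrite /Enext eqSS natr_uphalf.
case: m => [|m] /=.
  rewrite big_mkcond big_ord1 /= s0 expr1 divff ?pnatr_eq0 //.
  by congr (expR (_ * A)); ring.
rewrite negbK -signr_odd /= negbK; case: (odd m) => /=.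
  under [in RHS]eq_bigl do rewrite eqb_id.
  by rewrite addn1 expr1; congr (expR (_ * A)); ring.
under [in RHS]eq_bigl do rewrite eqbF_neg negbK.
by rewrite addn0 expr0; congr (expR (_ * A)); ring.
Qed.

Lemma size_Eseq x n : size (Eseq A x n) = n.+1.
Proof. by elim: n => //= n IH; rewrite size_rcons IH. Qed.

Lemma nth_Eseq x n j : (j <= n)%N -> (Eseq A x n)`_j = E j A x.
Proof.
elim: n => [|n IH]; first by rewrite leqn0 => /eqP ->.
rewrite leq_eqVlt => /predU1P[-> //|lt_jn] /=.
by rewrite nth_rcons size_Eseq lt_jn IH.
Qed.

Lemma E_S x n : E n.+1 A x = Enext A x (Eseq A x n) n.+1.
Proof. by rewrite /E /= nth_rcons size_Eseq ltnn eqxx. Qed.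

Lemma E_expR n x : (0 < n)%N ->
  E n A x =
  expR ((-1) ^+ n * (\sum_(j < n | odd j != odd n) x * E j A x - (uphalf n)%:R) * A).
Proof.
case: n => // n _; rewrite E_S Enext_expR ?nth_Eseq // mulr_sumr.
rewrite (eq_bigr (fun j : 'I_n.+1 => x * E j A x)) => [//|j _].
by rewrite nth_Eseq // -ltnS.
Qed.

Lemma E_at1_is_derive n :
  E n A 1 = 1 /\ is_derive (1 : R) 1 (fun x => x * E n A x) (dxE_poly R n).[A].
Proof.
elim/ltn_ind: n => -[_|m IH].
  split; first by [].
  have -> : (fun x => x * E 0 A x) = id by apply/funext => x; rewrite mulr1.
  by apply: is_derive_eq; rewrite dxE_poly0 hornerC.
have E1 j : (j < m.+1)%N -> E j A 1 = 1 by case/IH.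
have T1 : \sum_(j < m.+1 | odd j != odd m.+1) 1 * E j A 1 = (uphalf m.+1)%:R.
  by rewrite -sum_odd_neq natr_sum; apply: eq_bigr => j _; rewrite mul1r E1.
(* dT (like dphi and dxE below) is used as an instance by [is_derive_eq]. *)
have dT : is_derive (1 : R) 1
    (fun x => \sum_(j < m.+1 | odd j != odd m.+1) x * E j A x)
    (\sum_(j < m.+1 | odd j != odd m.+1) (dxE_poly R j).[A]).
  by apply: is_derive_sum_cond => j _; case: (IH j (ltn_ord j)).
split; first by rewrite E_expR // T1 subrr mulr0 mul0r expR0.
under eq_fun do rewrite (E_expR _ _ (ltn0Sn m)).
apply: is_derive_eq.
rewrite T1 subrr mulr0 mul0r expR0 dxE_polyE hornerD hornerC hornerZ hornerMX horner_sum.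
rewrite !scale1r scale0r add0r subr0 mul1r.
(* [set] abstracts both convertible copies of the sum into one atom for [ring]. *)
set S := \sum_(j < m.+1 | _) _.
by rewrite /GRing.scale /=; ring.
Qed.

Lemma phi_is_derive n :
  (0 < n)%N -> is_derive (1 : R) 1 (phi n A) (\sum_(j < n) dxE_poly R j).[A].
Proof.
elim: n => [//|[_ _|n IH _]].
  have -> : phi 1 A = fun x => x - 1 by [].
  by apply: is_derive_eq; rewrite big_ord1 dxE_poly0 hornerC subr0.
have -> : phi n.+2 A = fun x => phi n.+1 A x - 1 + x * E n.+1 A x by [].
have dphi := IH isT; have [_ dxE] := E_at1_is_derive n.+1.
by apply: is_derive_eq; rewrite subr0 [in RHS]big_ord_recr hornerD.
Qed.
End Exponentials.

Theorem lemma4p5 (R : realType) (n : nat) : (1 <= n)%N ->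
  exists p : {poly R},
    (forall A : R, is_derive (1 : R) (1 : R) (fun x : R => phi n A x) p.[A]) /\
    size p = n /\
    lead_coef p = (if (n %% 4 == 0)%N || (n %% 4 == 1)%N then 1 else -1).
Proof.
move=> n_gt0; exists (\sum_(j < n) dxE_poly R j).
split=> [A|]; first exact: phi_is_derive.
by case: n n_gt0 => // m _; apply: size_lead_coef_sum_dxE_poly.
Qed.
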